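(* Let $u,v\in\mathbb{R}^n$ be nonzero and $A=uv^T$. Then $A$ is a Karamardian matrix if and only if $u$ is unisigned (i.e. $u\ge 0$ or $u\le 0$ entrywise) and $u^Tv>0$.
   Context: For $A\in\mathbb{R}^{n\times n}$ let $R(A)$, $N(A^T)$ denote the range of $A$ and null space of $A^T$, let $K_A=\mathbb{R}^n_+\cap R(A)$ and $K_A^*=\{y\in\mathbb{R}^n: x^Ty\ge 0 \text{ for all } x\in K_A\}$ (one has $K_A^*=\mathbb{R}^n_++N(A^T)$, and its interior is $\{a+b: a>0,\ b\in N(A^T)\}$). For $q\in\mathbb{R}^n$, the problem LCP$(A,K_A,q)$ is to find $x$ with $x\in K_A$, $Ax+q\in K_A^*$ and $x^T(Ax+q)=0$. $A$ is called a Karamardian matrix if $K_A\ne\{0\}$ and there exists $d$ in the interior of $K_A^*$ such that both LCP$(A,K_A,0)$ and LCP$(A,K_A,d)$ have $x=0$ as their only solution. *)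

From HB Require Import structures.
From mathcomp Require Import all_boot all_order all_algebra.
From mathcomp Require Import reals.
Set Implicit Arguments. Unset Strict Implicit. Unset Printing Implicit Defensive.
Import Order.TTheory GRing.Theory Num.Theory.
Local Open Scope ring_scope.

Section Defs.
Variables (R : realType) (n : nat).

Definition in_range (A : 'M[R]_n) (x : 'cV[R]_n) : Prop :=
  exists y : 'cV[R]_n, x = A *m y.

Definition in_nullT (A : 'M[R]_n) (b : 'cV[R]_n) : Prop := A^T *m b = 0.

Definition KA (A : 'M[R]_n) (x : 'cV[R]_n) : Prop :=
  (forall i, 0 <= x i 0) /\ in_range A x.

Definition KA_dual (A : 'M[R]_n) (y : 'cV[R]_n) : Prop :=
  forall x, KA A x -> 0 <= (x^T *m y) 0 0.

(* interior of K_A^*, as described in the paper: {a + b : a > 0, b in N(A^T)} *)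
Definition KA_dual_int (A : 'M[R]_n) (d : 'cV[R]_n) : Prop :=
  exists a b : 'cV[R]_n, (forall i, 0 < a i 0) /\ in_nullT A b /\ d = a + b.

Definition LCP_sol (A : 'M[R]_n) (q x : 'cV[R]_n) : Prop :=
  KA A x /\ KA_dual A (A *m x + q) /\ (x^T *m (A *m x + q)) 0 0 = 0.

Definition karamardian (A : 'M[R]_n) : Prop :=
  (exists x, KA A x /\ x <> 0) /\
  exists d, KA_dual_int A d /\
    (forall x, LCP_sol A 0 x -> x = 0) /\
    (forall x, LCP_sol A d x -> x = 0).

Definition unisigned (u : 'cV[R]_n) : Prop :=
  (forall i, 0 <= u i 0) \/ (forall i, u i 0 <= 0).

End Defs.

From HB Require Import structures.
From mathcomp Require Import all_boot all_order all_algebra.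
From mathcomp Require Import reals.
From mathcomp Require Import ring.
Import Order.TTheory GRing.Theory Num.Theory.
Local Open Scope ring_scope.
Set Implicit Arguments. Unset Strict Implicit.

(* For A = u v^T one has A y = (v.y) u, so R(A) is the line
   spanned by u.  If K_A <> {0}, this line meets R^n_+ outside 0, which forces
   u to be unisigned; conversely, a unisigned u <> 0 can be written u = s w with
   s <> 0, w >= 0 and w <> 0, and then K_A is exactly the ray {c w : c >= 0}.
   On this ray the cone LCP(A, K_A, q) collapses to the scalar complementarity
   problem  c >= 0, c k + r >= 0, c (c k + r) = 0  with k = (u.v)(w.w) and
   r = w.q, because K_A^* = {y : w.y >= 0}.  Moreover every d in the interior
   of K_A^* has w.d > 0.  The scalar problem has only c = 0 as solution when
   k > 0 and r >= 0, whereas for k <= 0 and r > 0 one of the problems with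
   right-hand side 0 or r has a positive solution. *)

Definition vdot {R : pzRingType} {n : nat} (p q : 'cV[R]_n) : R :=
  (p^T *m q) 0 0.

Section DotProduct.
Variables (R : realDomainType) (n : nat).
Implicit Types (p q r : 'cV[R]_n) (c : R).

Lemma vdotE p q : vdot p q = \sum_i p i 0 * q i 0.
Proof. by rewrite /vdot mxE; apply: eq_bigr => i _; rewrite mxE. Qed.

Lemma vdotC p q : vdot p q = vdot q p.
Proof. by rewrite !vdotE; apply: eq_bigr => i _; rewrite mulrC. Qed.

Lemma vdotZr p q c : vdot p (c *: q) = c * vdot p q.
Proof.
by rewrite !vdotE mulr_sumr; apply: eq_bigr => i _; rewrite mxE mulrCA.
Qed.

Lemma vdotZl p q c : vdot (c *: p) q = c * vdot p q.
Proof. by rewrite vdotC vdotZr vdotC. Qed.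

Lemma vdotDr p q r : vdot p (q + r) = vdot p q + vdot p r.
Proof.
by rewrite !vdotE -big_split; apply: eq_bigr => i _; rewrite mxE mulrDr.
Qed.

Lemma vdot0r p : vdot p 0 = 0.
Proof. by rewrite /vdot mulmx0 mxE. Qed.

Lemma rank1_mulmx (u v y : 'cV[R]_n) : (u *m v^T) *m y = vdot v y *: u.
Proof.
rewrite -mulmxA; apply/matrixP => i j.
by rewrite ord1 !mxE big_ord1 mulrC.
Qed.

Lemma vdot_gt0 p q i0 :
  (forall i, 0 <= p i 0) -> 0 < p i0 0 -> (forall i, 0 < q i 0) -> 0 < vdot p q.
Proof.
move=> hp hi0 hq; rewrite vdotE (bigD1 i0) //= ltr_wpDr ?mulr_gt0 //.
by rewrite sumr_ge0 // => i _; rewrite mulr_ge0 // ltW.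
Qed.

Lemma nonzero_entry p : p != 0 -> exists i, p i 0 != 0.
Proof.
move=> hp; case: (pickP (fun i => p i 0 != 0)) => [i hi|hn]; first by exists i.
move/eqP: hp; case; apply/matrixP => i j; rewrite ord1 mxE.
by move: (hn i) => /negbFE /eqP.
Qed.

Lemma vdot_self_gt0 p : p != 0 -> 0 < vdot p p.
Proof.
move=> /nonzero_entry [i hi]; rewrite vdotE (bigD1 i) //= ltr_pwDl //.
  by rewrite -expr2 exprn_even_gt0.
by rewrite sumr_ge0 // => k _; rewrite -expr2 sqr_ge0.
Qed.

End DotProduct.

Definition scalar_lcp {R : numDomainType} (k r c : R) : Prop :=
  [/\ 0 <= c, 0 <= c * k + r & c * (c * k + r) = 0].

Section ScalarLCP.
Variable R : realFieldType.
Implicit Types k r c : R.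

Lemma scalar_lcp_trivial k r c : 0 < k -> 0 <= r -> scalar_lcp k r c -> c = 0.
Proof.
move=> hk hr [hc _ hcomp].
have hquad : c * c * k = 0.
  apply/eqP; rewrite eq_le mulr_ge0 ?mulr_ge0 ?(ltW hk) // andbT.
  by rewrite -[X in _ <= X]hcomp mulrDr mulrA lerDl mulr_ge0.
by move: hquad => /eqP; rewrite !mulf_eq0 orbb (gt_eqF hk) orbF => /eqP.
Qed.

(* With a nonpositive slope, the problem with offset 0 (when k = 0) or the
   problem with a positive offset r (when k < 0) has a positive solution. *)
Lemma scalar_lcp_nontrivial k r :
  k <= 0 -> 0 < r -> exists2 c, 0 < c & scalar_lcp k 0 c \/ scalar_lcp k r c.
Proof.
rewrite le_eqVlt => /orP [/eqP -> | hk] hr.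
  by exists 1 => //; left; rewrite /scalar_lcp !(mulr0, addr0).
have hk0 : k != 0 by rewrite lt_eqF.
exists (r / - k); first by rewrite divr_gt0 // oppr_gt0.
have hzero : r / - k * k + r = 0 by rewrite invrN mulrN mulNr divfK // addNr.
right; rewrite /scalar_lcp hzero mulr0.
by split=> //; rewrite ltW // divr_gt0 // oppr_gt0.
Qed.

End ScalarLCP.

(* A nonzero element of K_A for A = u v^T is a nonzero multiple of u that is
   entrywise nonnegative, so u itself is unisigned. *)
Lemma KA_nonzero_unisigned (R : realType) (n : nat) (u v : 'cV[R]_n) :
  (exists x, KA (u *m v^T) x /\ x <> 0) -> unisigned u.
Proof.
move=> [x [[hx [y hy]] hx0]]; rewrite rank1_mulmx in hy.
set t := vdot v y in hy.
have ht : t != 0 by apply/eqP => h; apply: hx0; rewrite hy h scale0r.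
have hxi i : 0 <= t * u i 0 by move: (hx i); rewrite hy mxE.
case: (ltrgtP t 0) ht => // ht _.
  by right => i; rewrite -(nmulr_rge0 _ ht).
by left => i; rewrite -(pmulr_rge0 _ ht).
Qed.

Lemma unisigned_ray (R : realType) (n : nat) (u : 'cV[R]_n) :
  u != 0 -> unisigned u ->
  exists s w i0, [/\ s != 0, u = s *: w, forall i, 0 <= w i 0 & 0 < w i0 0].
Proof.
move=> /nonzero_entry [i0 hi0] [h|h].
  exists 1, u, i0; split; rewrite ?oner_neq0 ?scale1r //.
  by rewrite lt0r hi0 h.
exists (-1), (- u), i0; split; rewrite ?oppr_eq0 ?oner_neq0 ?scaleN1r ?opprK //.
  by move=> i; rewrite mxE oppr_ge0.
by rewrite mxE oppr_gt0 lt_neqAle hi0 h.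
Qed.

Section RankOneRay.
Variables (R : realType) (n : nat) (u v w : 'cV[R]_n) (s : R) (i0 : 'I_n).
Hypotheses (hv : v != 0) (hs : s != 0) (huw : u = s *: w).
Hypotheses (hw : forall i, 0 <= w i 0) (hwi0 : 0 < w i0 0).

Let A := u *m v^T.

(* The slope of the scalar problem obtained by restricting to the ray. *)
Let k := vdot u v * vdot w w.

Lemma ray_nonzero : w != 0.
Proof. by apply/eqP => h; move: hwi0; rewrite h mxE ltxx. Qed.

Lemma slope_pos : 0 < k <-> 0 < vdot u v.
Proof.
by rewrite /k pmulr_lgt0 //; apply: vdot_self_gt0; exact: ray_nonzero.
Qed.

Lemma KA_ray x : KA A x <-> exists2 c, 0 <= c & x = c *: w.
Proof.
split.
  move=> [hx [y hy]]; rewrite /A rank1_mulmx huw scalerA in hy.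
  exists (vdot v y * s) => //.
  by move: (hx i0); rewrite hy mxE pmulr_lge0.
move=> [c hc ->]; split; first by move=> i; rewrite mxE mulr_ge0.
have hvv : vdot v v != 0 by rewrite gt_eqF // vdot_self_gt0.
exists ((c / s / vdot v v) *: v).
by rewrite /A rank1_mulmx vdotZr divfK // huw scalerA divfK.
Qed.

Lemma ray_in_KA : KA A w.
Proof. by apply/KA_ray; exists 1; rewrite ?scale1r. Qed.

Lemma KA_dual_ray y : KA_dual A y <-> 0 <= vdot w y.
Proof.
split; first by move=> hy; apply: hy; exact: ray_in_KA.
by move=> hy x /KA_ray [c hc ->]; rewrite -/(vdot _ _) vdotZl mulr_ge0.
Qed.

Lemma ray_response c q : vdot w (A *m (c *: w) + q) = c * k + vdot w q.
Proof.
rewrite vdotDr /A rank1_mulmx !vdotZr /k huw vdotZr vdotZl [vdot w v]vdotC.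
by congr (_ + _); ring.
Qed.

Lemma LCP_sol_ray q x :
  LCP_sol A q x <-> exists2 c, scalar_lcp k (vdot w q) c & x = c *: w.
Proof.
split.
  move=> [/KA_ray [c hc ->] [/KA_dual_ray hdual hcomp]].
  exists c => //; move: hdual hcomp; rewrite -/(vdot _ _) vdotZl ray_response.
  by split.
move=> [c [hc hdual hcomp] ->]; split; first by apply/KA_ray; exists c.
by rewrite -/(vdot _ _) vdotZl KA_dual_ray ray_response.
Qed.

(* Every d in the interior of K_A^* pairs positively with w: its N(A^T)-part
   is orthogonal to u, hence to w. *)
Lemma KA_dual_int_ray d : KA_dual_int A d -> 0 < vdot w d.
Proof.
move=> [a [b [ha [hb ->]]]].
have hub : vdot u b = 0.
  move: hb; rewrite /in_nullT /A trmx_mul trmxK rank1_mulmx => /eqP.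
  by rewrite scalemx_eq0 (negbTE hv) orbF => /eqP.
have hwb : vdot w b = 0.
  by move: hub => /eqP; rewrite huw vdotZl mulf_eq0 (negbTE hs) => /eqP.
by rewrite vdotDr hwb addr0 (vdot_gt0 hw hwi0 ha).
Qed.

(* A is Karamardian iff the slope k is positive: for k <= 0 the scalar problem
   yields a nonzero solution of LCP(A,K_A,0) or LCP(A,K_A,d); for k > 0 the
   direction d = (1,...,1) works. *)
Lemma karamardian_ray : karamardian A <-> 0 < vdot u v.
Proof.
have ray_scaled_nonzero c : 0 < c -> c *: w <> 0.
  by move=> hc /matrixP /(_ i0 0); rewrite !mxE => /eqP; rewrite gt_eqF ?mulr_gt0.
rewrite -slope_pos; split.
  move=> [_ [d [hd [h0 hdsol]]]]; rewrite ltNge; apply/negP => hk.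
  have [c hc hsol] := scalar_lcp_nontrivial hk (KA_dual_int_ray hd).
  apply: (ray_scaled_nonzero c hc).
  case: hsol => hsol; [apply: h0 | apply: hdsol]; apply/LCP_sol_ray.
    by exists c; rewrite ?vdot0r.
  by exists c.
move=> hk; split.
  by exists w; split; [exact: ray_in_KA | apply/eqP; exact: ray_nonzero].
have hone i : 0 < (const_mx 1 : 'cV[R]_n) i 0 by rewrite mxE ltr01.
exists (const_mx 1); split.
  by exists (const_mx 1), 0; rewrite addr0 /in_nullT mulmx0.
split=> x /LCP_sol_ray [c hc ->].
  by rewrite (scalar_lcp_trivial hk _ hc) ?scale0r // vdot0r.
by rewrite (scalar_lcp_trivial hk _ hc) ?scale0r // ltW // (vdot_gt0 hw hwi0 hone).
Qed.

End RankOneRay.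

Theorem mainTheorem6 (R : realType) (n : nat) (u v : 'cV[R]_n) :
  u != 0 -> v != 0 ->
  karamardian (u *m v^T) <-> (unisigned u /\ 0 < (u^T *m v) 0 0).
Proof.
move=> hu hv; split.
  move=> hkar; have hun := KA_nonzero_unisigned (proj1 hkar).
  have [s [w [i0 [hs huw hw hwi0]]]] := unisigned_ray hu hun.
  by split=> //; apply/(karamardian_ray hv hs huw hw hwi0).
move=> [hun huv]; have [s [w [i0 [hs huw hw hwi0]]]] := unisigned_ray hu hun.
exact/(karamardian_ray hv hs huw hw hwi0).
Qed.
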